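(* Let $m,n\ge 3$ be (not necessarily distinct) integers. Then the strong product $C_m\boxtimes C_n$ is $\mathbb{Z}_{mn}$-distance antimagic if and only if both $m$ and $n$ are odd.
   Context: $C_n$ is the cycle of length $n$. The strong product $G_1\boxtimes G_2$ has vertex set $V(G_1)\times V(G_2)$, with distinct $(x_1,x_2),(y_1,y_2)$ adjacent iff for each $i$ either $x_i=y_i$ or $x_iy_i\in E(G_i)$. For a graph $G$ with $N$ vertices, a $\mathbb{Z}_N$-distance antimagic labelling is a bijection $f:V(G)\to\mathbb{Z}_N$ such that the weights $w_f(x)=\sum_{y\in N(x)} f(y)$ (mod $N$, $N(x)$ the open neighbourhood) are pairwise distinct; $G$ is $\mathbb{Z}_N$-distance antimagic if such a labelling exists. *)

From mathcomp Require Import all_boot.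
Set Implicit Arguments. Unset Strict Implicit. Unset Printing Implicit Defensive.

(* Cycle C_n on vertex set 'I_n: i ~ j iff j = i+1 mod n or i = j+1 mod n
   (and i <> j).  For n >= 3 this is the n-cycle. *)
Definition cycle_adj (n : nat) : rel 'I_n :=
  fun i j => (i != j) && ((j == (i + 1) %% n :> nat) || (i == (j + 1) %% n :> nat)).

Definition strong_adj (T1 T2 : finType) (e1 : rel T1) (e2 : rel T2) : rel (T1 * T2) :=
  fun x y => (x != y) && ((x.1 == y.1) || e1 x.1 y.1) && ((x.2 == y.2) || e2 x.2 y.2).

Definition dweight (T : finType) (e : rel T) (N : nat) (f : T -> 'I_N) (x : T) : nat :=
  (\sum_(y : T | e x y) (f y : nat)) %% N.

Definition ZN_distance_antimagic_labelling (T : finType) (e : rel T)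
    (f : T -> 'I_#|T|) : Prop :=
  bijective f /\ injective (dweight e f).

Definition ZN_distance_antimagic (T : finType) (e : rel T) : Prop :=
  exists f : T -> 'I_#|T|, ZN_distance_antimagic_labelling e f.

From mathcomp Require Import all_boot zify.
Set Implicit Arguments. Unset Strict Implicit. Unset Printing Implicit Defensive.

(* Necessity is a counting argument valid for any symmetric k-regular graph
   on N vertices: labels and weights of an antimagic labelling both run
   through 0, ..., N-1, so both sum to C(N,2), while double counting makes the
   weights sum to k times the labels modulo N.  Hence C(N,2) = k C(N,2) mod N,
   which forces k odd when N is even; the strong product of cycles is
   8-regular, so N = mn must be odd.

   Sufficiency uses the labelling (i, j) |-> i + m j.  Since closed
   neighbourhoods in the strong product are 3 x 3 blocks, the weight of (i, j)
   is 8 (i + m j) up to wrap-around corrections that are multiples of m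
   depending only on i, and multiples of mn.  As 8 is invertible modulo the odd
   numbers m and mn, equal weights force first equal rows i, then equal labels. *)

(* An injective map into 0, ..., #|T|-1 is onto, so its values sum to C(#|T|, 2). *)
Lemma sum_inj_below (T : finType) (h : T -> nat) :
  (forall x, h x < #|T|) -> injective h -> \sum_x h x = 'C(#|T|, 2).
Proof.
move=> h_lt h_inj; pose g x : 'I_#|T| := Ordinal (h_lt x).
have g_bij : bijective g.
  by apply: inj_card_bij; [move=> x y /(congr1 val) /h_inj | rewrite card_ord].
by rewrite -bin2_sum big_mkord (reindex g) //; exact: onW_bij.
Qed.

(* Double counting in a symmetric k-regular graph: every label is counted
   once for each of its k neighbours. *)
Lemma sum_neighbour_sums (T : finType) (e : rel T) (k : nat) (F : T -> nat) :
  symmetric e -> (forall x, #|[pred y | e x y]| = k) ->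
  \sum_x \sum_(y | e x y) F y = k * \sum_y F y.
Proof.
move=> e_sym e_deg; rewrite (exchange_big_dep xpredT) //= big_distrr /=.
apply: eq_bigr => y _; rewrite (eq_bigl [pred x | e y x]) => [|x]; last exact: e_sym.
by rewrite sum_nat_const /= e_deg mulnC.
Qed.

Lemma antimagic_regular_congr (T : finType) (e : rel T) (k : nat) :
  symmetric e -> (forall x, #|[pred y | e x y]| = k) -> ZN_distance_antimagic e ->
  'C(#|T|, 2) = k * 'C(#|T|, 2) %[mod #|T|].
Proof.
move=> e_sym e_deg [f [f_bij w_inj]].
have labels_sum : \sum_x (f x : nat) = 'C(#|T|, 2).
  by apply: sum_inj_below => [x|x y /val_inj]; [exact: ltn_ord | exact: bij_inj].
have [T0|T_gt0] := posnP #|T|; first by rewrite T0 bin0n muln0.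
have weights_sum : \sum_x dweight e f x = 'C(#|T|, 2).
  by apply: sum_inj_below => // x; rewrite /dweight ltn_pmod.
rewrite -{1}weights_sum -labels_sum -(sum_neighbour_sums (fun y => f y : nat) e_sym e_deg).
exact: modn_summ.
Qed.

(* For N = 2K even, C(N,2) = K (N - 1) with N - 1 odd, so the congruence
   C(N,2) = k C(N,2) mod 2K reduces to N - 1 = k (N - 1) mod 2: k is odd. *)
Lemma binom2_congr_odd (N k : nat) : 0 < N -> ~~ odd N ->
  'C(N, 2) = k * 'C(N, 2) %[mod N] -> odd k.
Proof.
move=> N_gt0 N_even; have N_half := odd_double_half N.
rewrite (negbTE N_even) add0n in N_half.
have K_gt0 : 0 < N./2 by lia.
have oddNm1 : odd N.-1 by move: N_even; rewrite -(prednK N_gt0) /=; case: (odd _).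
have binomE : 'C(N, 2) = N./2 * N.-1 by rewrite bin2 -{1}N_half -doubleMl half_double.
rewrite binomE mulnCA -{3 6}N_half -muln2 -!muln_modr // => /eqP.
by rewrite eqn_pmul2l // !modn2 oddM oddNm1 andbT; case: (odd k).
Qed.

Lemma strong_adj_sym (T1 T2 : finType) (e1 : rel T1) (e2 : rel T2) :
  symmetric e1 -> symmetric e2 -> symmetric (strong_adj e1 e2).
Proof.
move=> e1_sym e2_sym x y.
by rewrite /strong_adj eq_sym [x.1 == _]eq_sym [x.2 == _]eq_sym e1_sym e2_sym.
Qed.

Lemma strong_closed_sum (T1 T2 : finType) (e1 : rel T1) (e2 : rel T2)
    (g : T1 * T2 -> nat) (x : T1 * T2) :
  \sum_(y | strong_adj e1 e2 x y) g y + g x =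
  \sum_(a | (x.1 == a) || e1 x.1 a) \sum_(b | (x.2 == b) || e2 x.2 b) g (a, b).
Proof.
rewrite pair_big_dep [RHS](bigD1 x) /= ?eqxx // addnC; congr (_ + _); first by case: x.
apply: eq_big => [y|[]//]; rewrite /strong_adj [y == x]eq_sym.
by case: (x == y); rewrite /= ?andbT ?andbF.
Qed.

Section Cycle.
Variable m : nat.
Implicit Types i a : 'I_m.

Lemma cycle_adj_sym : symmetric (@cycle_adj m).
Proof. by move=> i a; rewrite /cycle_adj eq_sym orbC. Qed.

Lemma ordS_val i : (ordS i : nat) = if i.+1 == m then 0 else i.+1.
Proof.
rewrite /=; case: eqP => [->|iS_ne]; first by rewrite modnn.
by rewrite modn_small //; have := ltn_ord i; lia.
Qed.

Lemma ord_pred_val i : (ord_pred i : nat) = if i == 0 :> nat then m.-1 else i.-1.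
Proof.
rewrite /=; have := ltn_ord i; case: eqP => [-> i_lt|i_ne0 i_lt].
  by rewrite add0n modn_small //; lia.
have -> : (i + m).-1 = i.-1 + m by lia.
by rewrite modnDr modn_small //; lia.
Qed.

Definition cycle_ball i : seq 'I_m := [:: ord_pred i; i; ordS i].

Lemma mem_cycle_ball i a : ((i == a) || cycle_adj i a) = (a \in cycle_ball i).
Proof.
rewrite /cycle_adj /cycle_ball !inE.
have -> : (a == (i + 1) %% m :> nat) = (a == ordS i) by rewrite -val_eqE /= addn1.
have -> : (i == (a + 1) %% m :> nat) = (ord_pred i == a).
  by rewrite -(inj_eq (@ordS_inj m)) ord_predK -val_eqE /= addn1.
rewrite [a == i]eq_sym [ord_pred i == a]eq_sym.
by case: (i =P a) => _ /=; rewrite ?orbT // orbC.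
Qed.

Lemma cycle_ball_index_sum i :
  ord_pred i + i + ordS i + m * (i == m.-1 :> nat) = 3 * i + m * (i == 0 :> nat).
Proof.
have i_lt := ltn_ord i; rewrite ordS_val ord_pred_val.
by case: (i =P 0 :> nat) => ?; case: (i =P m.-1 :> nat) => ?; case: (i.+1 =P m) => ? /=; lia.
Qed.

Hypothesis m_ge3 : 3 <= m.

Lemma cycle_ball_uniq i : uniq (cycle_ball i).
Proof.
have i_lt := ltn_ord i.
rewrite /cycle_ball /= !inE -!val_eqE /=.
move: (ordS_val i) (ord_pred_val i) => /= -> ->.
by case: (i =P 0 :> nat) => ?; case: (i.+1 =P m) => ? /=; apply/and3P; split; lia.
Qed.

Lemma cycle_closed_sum i (F : 'I_m -> nat) :
  \sum_(a | (i == a) || cycle_adj i a) F a = F (ord_pred i) + F i + F (ordS i).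
Proof.
rewrite (eq_bigl [in cycle_ball i]) => [|a]; last exact: mem_cycle_ball.
by rewrite -big_uniq ?cycle_ball_uniq //= !big_cons big_nil addn0 addnA.
Qed.

End Cycle.

Lemma eq_mod_of_eq_add_mul (x y c c' N : nat) :
  x + c * N = y + c' * N -> x = y %[mod N].
Proof. by move=> eq_xy; rewrite -(modnMDl c x) addnC eq_xy addnC modnMDl. Qed.

Local Notation torus_adj m n := (strong_adj (@cycle_adj m) (@cycle_adj n)).

Section Torus.
Variables m n : nat.

Definition grid_label (x : 'I_m * 'I_n) : nat := x.1 + m * x.2.

Lemma grid_label_lt x : grid_label x < m * n.
Proof. by case: x => i j; rewrite /grid_label /=; have := ltn_ord i; have := ltn_ord j; nia. Qed.

Lemma grid_label_inj : injective grid_label.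
Proof.
move=> [i j] [i' j']; rewrite /grid_label /= => eq_label.
have := ltn_ord i; have := ltn_ord i' => lt_i' lt_i.
have eq_j : (j : nat) = j' by nia.
have eq_i : (i : nat) = i' by nia.
by rewrite (val_inj eq_i) (val_inj eq_j).
Qed.

Hypotheses (m_ge3 : 3 <= m) (n_ge3 : 3 <= n).

Lemma torus_closed_sum (g : 'I_m * 'I_n -> nat) (i : 'I_m) (j : 'I_n) :
  \sum_(y | torus_adj m n (i, j) y) g y + g (i, j) =
  \sum_(a <- cycle_ball i) \sum_(b <- cycle_ball j) g (a, b).
Proof.
rewrite strong_closed_sum (cycle_closed_sum m_ge3) /= !(cycle_closed_sum n_ge3).
by rewrite /cycle_ball !big_cons !big_nil /=; lia.
Qed.

Lemma torus_degree (x : 'I_m * 'I_n) : #|[pred y | torus_adj m n x y]| = 8.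
Proof.
rewrite -sum1_card; have := torus_closed_sum (fun=> 1) x.1 x.2.
rewrite -surjective_pairing /cycle_ball !big_cons !big_nil /= => deg_sum.
by apply/eqP; rewrite -(eqn_add2r 1) deg_sum.
Qed.

Lemma grid_weight_identity (i : 'I_m) (j : 'I_n) :
  \sum_(y | torus_adj m n (i, j) y) grid_label y
    + 3 * m * (i == m.-1 :> nat) + 3 * (m * n) * (j == n.-1 :> nat) =
  8 * grid_label (i, j) + 3 * m * (i == 0 :> nat) + 3 * (m * n) * (j == 0 :> nat).
Proof.
have := torus_closed_sum grid_label i j.
have := cycle_ball_index_sum i; have := cycle_ball_index_sum j.
rewrite /cycle_ball !big_cons !big_nil /grid_label.
move: (ord_pred i) (ordS i) (ord_pred j) (ordS j) => pi si pj sj /=.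
move=> /(congr1 (muln m)); rewrite !mulnDr !mulnA; lia.
Qed.

Lemma grid_weight_mod_m (i : 'I_m) (j : 'I_n) :
  \sum_(y | torus_adj m n (i, j) y) grid_label y = 8 * i %[mod m].
Proof.
apply: (@eq_mod_of_eq_add_mul _ _
  (3 * (i == m.-1 :> nat) + 3 * n * (j == n.-1 :> nat))
  (8 * j + 3 * (i == 0 :> nat) + 3 * n * (j == 0 :> nat))).
by have := grid_weight_identity i j; rewrite /grid_label /=; lia.
Qed.

Lemma grid_weight_mod_mn (i : 'I_m) (j : 'I_n) :
  \sum_(y | torus_adj m n (i, j) y) grid_label y + 3 * m * (i == m.-1 :> nat) =
  8 * grid_label (i, j) + 3 * m * (i == 0 :> nat) %[mod m * n].
Proof.
apply: (@eq_mod_of_eq_add_mul _ _ (3 * (j == n.-1 :> nat)) (3 * (j == 0 :> nat))).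
by have := grid_weight_identity i j; lia.
Qed.
End Torus.

Lemma coprime_mul_mod_inj (d k a b : nat) : coprime d k -> a < d -> b < d ->
  k * a = k * b %[mod d] -> a = b.
Proof.
move=> cop_dk; wlog le_ba : a b / b <= a => [hwlog a_lt b_lt eq_mod|a_lt b_lt].
  by case: (leqP b a) => [le_ba|/ltnW le_ab]; [|symmetry]; apply: hwlog.
move/eqP; rewrite eqn_mod_dvd ?leq_mul2l ?le_ba ?orbT // -mulnBr Gauss_dvdr //.
by rewrite /dvdn modn_small; lia.
Qed.

Lemma odd_coprime8 (d : nat) : odd d -> coprime d 8.
Proof. by move=> d_odd; rewrite -[8]/(2 ^ 3) coprime_pexpr // coprimen2. Qed.

(* For odd m, n the grid labelling is Z_mn-distance antimagic: equal weights
   modulo m force equal rows (8 is invertible mod m), and then equal weights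
   modulo mn force equal labels (8 is invertible mod mn). *)
Lemma torus_antimagic_of_odd (m n : nat) : 3 <= m -> 3 <= n -> odd m -> odd n ->
  ZN_distance_antimagic (torus_adj m n).
Proof.
move=> m_ge3 n_ge3 m_odd n_odd.
have cardT : #|{: 'I_m * 'I_n}| = m * n by rewrite card_prod !card_ord.
have label_lt (x : 'I_m * 'I_n) : grid_label x < #|{: 'I_m * 'I_n}|.
  by rewrite cardT grid_label_lt.
pose f x := Ordinal (label_lt x).
have f_inj : injective f by move=> x y /(congr1 val) /grid_label_inj.
exists f; split; first by apply: inj_card_bij f_inj _; rewrite card_ord.
move=> [i j] [i' j'] eq_w.
have {}eq_w : \sum_(y | torus_adj m n (i, j) y) grid_label y =
              \sum_(y | torus_adj m n (i', j') y) grid_label y %[mod m * n].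
  by rewrite -cardT.
have eq_i : i = i'.
  apply/val_inj/(coprime_mul_mod_inj (odd_coprime8 m_odd) (ltn_ord i) (ltn_ord i')).
  rewrite -(grid_weight_mod_m m_ge3 n_ge3 i j) -(grid_weight_mod_m m_ge3 n_ge3 i' j').
  by have := congr1 (modn^~ m) eq_w; rewrite /= !modn_dvdm ?dvdn_mulr.
subst i'; apply: grid_label_inj.
have mn_odd : odd (m * n) by rewrite oddM m_odd.
apply: (coprime_mul_mod_inj (odd_coprime8 mn_odd)); rewrite ?grid_label_lt //.
apply/eqP; rewrite -(eqn_modDr (3 * m * (i == 0 :> nat))).
rewrite -(grid_weight_mod_mn m_ge3 n_ge3 i j) -(grid_weight_mod_mn m_ge3 n_ge3 i j').
by rewrite eqn_modDr; apply/eqP.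
Qed.

Theorem mainTheorem17 (m n : nat) (hm : 3 <= m) (hn : 3 <= n) :
  ZN_distance_antimagic (strong_adj (@cycle_adj m) (@cycle_adj n))
  <-> (odd m && odd n).
Proof.
split=> [antimagic|/andP [m_odd n_odd]]; last exact: torus_antimagic_of_odd.
have torus_sym := strong_adj_sym (@cycle_adj_sym m) (@cycle_adj_sym n).
have := antimagic_regular_congr torus_sym (torus_degree hm hn) antimagic.
rewrite card_prod !card_ord -oddM => binom_congr.
apply/negPn/negP => mn_even.
have mn_gt0 : 0 < m * n by rewrite muln_gt0; apply/andP; split; lia.
by have := binom2_congr_odd mn_gt0 mn_even binom_congr.
Qed.
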